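(* Let $T\in\mathcal L(\mathcal H)$ be invertible and $C>0$. Let $\mathcal X$ be the set of $x\in\mathcal H$ for which there exist strictly increasing sequences $\{n_k\}_k$ and $\{l_k\}_k$ of positive integers such that the limits $\lim_k\|T^{-l_k}x\|$ and $\lim_k\|T^{n_k}x\|$ exist and $\lim_k\|T^{-l_k}x\|\leq C\lim_k\|T^{n_k}x\|$. If $\mathcal X$ is dense in $\mathcal H$, then $$\sup_{n\geq0}\|T^{-n}\|\leq C\Bigl(\sup_{n\geq0}\|T^n\|\Bigr)^2 .$$
   Context: $\mathcal H$ is a complex Hilbert space. *)

From HB Require Import structures.
From mathcomp Require Import all_boot all_order all_algebra.
From mathcomp Require Import all_classical all_reals.
From mathcomp Require Import ereal topology normedtype sequences.
From mathcomp Require Import complex.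
Set Implicit Arguments. Unset Strict Implicit. Unset Printing Implicit Defensive.
Import Order.TTheory GRing.Theory Num.Theory numFieldNormedType.Exports.
Local Open Scope classical_set_scope.
Local Open Scope ring_scope.

Definition hnorm (R : realType) (H : lmodType R[i]) (inner : H -> H -> R[i])
  (x : H) : R := Num.sqrt (complex.Re (inner x x)).

Record is_complex_hilbert (R : realType) (H : lmodType R[i])
    (inner : H -> H -> R[i]) : Prop := {
  inner_linear : forall (a : R[i]) (x y z : H),
      inner (a *: x + y) z = a * inner x z + inner y z;
  inner_conj : forall x y : H, inner y x = conjc (inner x y);
  inner_ge0 : forall x : H, 0 <= inner x x;
  inner_eq0 : forall x : H, inner x x = 0 -> x = 0;
  inner_complete : forall u : nat -> H,
      (forall e : R, 0 < e -> exists N : nat, forall m n : nat,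
          (N <= m)%N -> (N <= n)%N -> hnorm inner (u m - u n) < e) ->
      exists l : H, forall e : R, 0 < e -> exists N : nat, forall n : nat,
          (N <= n)%N -> hnorm inner (u n - l) < e
}.

Definition bounded_linear (R : realType) (H : lmodType R[i])
  (inner : H -> H -> R[i]) (T : H -> H) : Prop :=
  (forall (a : R[i]) (x y : H), T (a *: x + y) = a *: T x + T y) /\
  exists M : R, forall x : H, hnorm inner (T x) <= M * hnorm inner x.

(* Operator norm, as an extended real (it is finite for bounded T). *)
Definition opnorm (R : realType) (H : lmodType R[i])
  (inner : H -> H -> R[i]) (T : H -> H) : \bar R :=
  ereal_sup [set (hnorm inner (T x))%:E | x in [set x | hnorm inner x <= 1]].

Definition hdense (R : realType) (H : lmodType R[i])
  (inner : H -> H -> R[i]) (X : set H) : Prop :=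
  forall (y : H) (e : R), 0 < e ->
    exists2 x, X x & hnorm inner (x - y) < e.

(* The set X of the statement; S is T^{-1}, so T^{-l} = iter l S. *)
Definition Xset (R : realType) (H : lmodType R[i])
  (inner : H -> H -> R[i]) (T S : H -> H) (C : R) : set H :=
  [set x | exists (n l : nat -> nat),
     [/\ (forall k, 0 < n k)%N, (forall k, 0 < l k)%N,
         (forall k, n k < n k.+1)%N, (forall k, l k < l k.+1)%N &
         exists a b : R,
           [/\ (fun k => hnorm inner (iter (l k) S x)) @ \oo --> a,
               (fun k => hnorm inner (iter (n k) T x)) @ \oo --> b &
               a <= C * b]]].

(** The bound for [T^-m] is first proved on the dense set [X], then extended
    by continuity.  For [x] in [X] with witnesses [n_k], [l_k] and limits
    [a <= C b], write [M = sup_n ||T^n||].  Once [l_k >= m] we have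
    [T^-m x = T^(l_k - m) (T^-l_k x)], so [||T^-m x|| <= M ||T^-l_k x||]; in
    the limit this gives [||T^-m x|| <= M a].  On the other side,
    [b <= M ||x||] because [||T^n_k x|| <= M ||x||].  Together,
    [||T^-m x|| <= C M^2 ||x||]. *)

From HB Require Import structures.
From mathcomp Require Import all_boot all_order all_algebra.
From mathcomp Require Import all_classical all_reals.
From mathcomp Require Import ereal topology normedtype sequences.
From mathcomp Require Import complex.
From mathcomp Require Import ring lra.
Import Order.TTheory GRing.Theory Num.Theory numFieldNormedType.Exports.
Local Open Scope classical_set_scope.
Local Open Scope ring_scope.

Lemma can_iter {T : Type} {f g : T -> T} n :
  cancel f g -> cancel (iter n f) (iter n g).
Proof. by move=> fK; elim: n => // n IHn x; rewrite iterSr iterS fK IHn. Qed.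

Lemma homoS_ltn_infl {u : nat -> nat} :
  (forall k, u k < u k.+1)%N -> forall k, (k <= u k)%N.
Proof. by move=> uS; elim=> // k IHk; apply: leq_ltn_trans IHk (uS k). Qed.

Section LinearMaps.
Context {K : pzRingType} {V : lmodType K}.
Implicit Types f : V -> V.

Lemma linear_iter {f} n : linear f -> linear (iter n f).
Proof. by move=> f_lin; elim: n => // n IHn a x y /=; rewrite IHn f_lin. Qed.

Lemma linear0_fun f : linear f -> f 0 = 0.
Proof.
move=> f_lin; have := f_lin 1 0 0; rewrite scaler0 addr0 scale1r => f00.
by apply: (addrI (f 0)); rewrite addr0 -f00.
Qed.

Lemma linearB_fun f x y : linear f -> f (x - y) = f x - f y.
Proof. by move=> f_lin; rewrite addrC -scaleN1r f_lin scaleN1r addrC. Qed.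

Lemma linearZ_fun f a x : linear f -> f (a *: x) = a *: f x.
Proof. by move=> f_lin; rewrite -[_ *: x]addr0 f_lin linear0_fun // addr0. Qed.

End LinearMaps.

Record is_inner_product {R : realType} {H : lmodType R[i]}
    (inner : H -> H -> R[i]) : Prop := {
  innerZDl : forall (a : R[i]) (x y z : H),
      inner (a *: x + y) z = a * inner x z + inner y z;
  inner_conjC : forall x y : H, inner y x = conjc (inner x y);
  inner_self_ge0 : forall x : H, 0 <= inner x x;
  inner_self_eq0 : forall x : H, inner x x = 0 -> x = 0 }.
Arguments innerZDl {R H inner}.
Arguments inner_conjC {R H inner}.
Arguments inner_self_ge0 {R H inner}.
Arguments inner_self_eq0 {R H inner}.

Lemma hilbert_inner_product {R : realType} {H : lmodType R[i]}
    {inner : H -> H -> R[i]} :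
  is_complex_hilbert inner -> is_inner_product inner.
Proof. by case. Qed.

Section InnerProductSpace.
Context {R : realType} {H : lmodType R[i]} {inner : H -> H -> R[i]}.
Hypothesis hI : is_inner_product inner.
Local Notation nrm := (hnorm inner).
Implicit Types (x y z : H) (f : H -> H).

Definition re_inner x y : R := complex.Re (inner x y).

Lemma inner0l z : inner 0 z = 0.
Proof.
have := innerZDl hI 1 0 0 z; rewrite scaler0 addr0 mul1r => inner00.
by apply: (addrI (inner 0 z)); rewrite addr0 -inner00.
Qed.

Lemma re_innerDl x y z : re_inner (x + y) z = re_inner x z + re_inner y z.
Proof. by rewrite /re_inner -[x in LHS]scale1r (innerZDl hI) mul1r raddfD. Qed.

Lemma re_innerZl (a : R) x z : re_inner ((a%:C)%C *: x) z = a * re_inner x z.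
Proof.
rewrite /re_inner -[_ *: x]addr0 (innerZDl hI) inner0l addr0.
by case: (inner x z) => r s /=; rewrite mul0r subr0.
Qed.

Lemma re_innerC x y : re_inner x y = re_inner y x.
Proof. by rewrite /re_inner (inner_conjC hI x); case: (inner x y). Qed.

Lemma re_innerDr x y z : re_inner z (x + y) = re_inner z x + re_inner z y.
Proof. by rewrite re_innerC re_innerDl !(re_innerC z). Qed.

Lemma re_innerZr (a : R) x z : re_inner z ((a%:C)%C *: x) = a * re_inner z x.
Proof. by rewrite re_innerC re_innerZl re_innerC. Qed.

Lemma re_inner_self_ge0 x : 0 <= re_inner x x.
Proof. by have := inner_self_ge0 hI x; rewrite lecE => /andP[]. Qed.

Lemma hnorm_ge0 x : 0 <= nrm x.
Proof. exact: sqrtr_ge0. Qed.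

Lemma hnorm_sq x : nrm x ^+ 2 = re_inner x x.
Proof. by rewrite sqr_sqrtr // re_inner_self_ge0. Qed.

Lemma hnorm0 : nrm 0 = 0.
Proof. by rewrite /hnorm inner0l sqrtr0. Qed.

Lemma hnorm_eq0 x : (nrm x == 0) = (x == 0).
Proof.
apply/eqP/eqP=> [|->]; last exact: hnorm0.
move=> /(congr1 (fun r => r ^+ 2)); rewrite hnorm_sq expr0n /re_inner => hRe.
apply: (inner_self_eq0 hI); have := inner_self_ge0 hI x.
by rewrite lecE; case: (inner x x) hRe => r s /= -> /andP[/eqP -> _].
Qed.

Lemma hnorm_gt0 x : (0 < nrm x) = (x != 0).
Proof. by rewrite lt_def hnorm_eq0 hnorm_ge0 andbT. Qed.

Lemma hnormZ (a : R) x : nrm ((a%:C)%C *: x) = `|a| * nrm x.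
Proof.
rewrite /hnorm -!/(re_inner _ _) re_innerZl re_innerZr mulrA -expr2.
by rewrite sqrtrM ?sqr_ge0 // sqrtr_sqr.
Qed.

Lemma hnormN x : nrm (- x) = nrm x.
Proof.
have -> : - x = ((-1)%:C)%C *: x.
  by rewrite -scaleN1r; congr (_ *: _); apply/eqP; rewrite eq_complex /= oppr0 !eqxx.
by rewrite hnormZ normrN1 mul1r.
Qed.

Lemma hnorm_sqD x y :
  nrm (x + y) ^+ 2 = nrm x ^+ 2 + 2 * re_inner x y + nrm y ^+ 2.
Proof.
by rewrite !hnorm_sq re_innerDl !re_innerDr [re_inner y x]re_innerC; ring.
Qed.

(* Expand [0 <= ||(||y||) x - (||x||) y||^2 = 2 ||x|| ||y|| (||x|| ||y|| - Re <x,y>)]. *)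
Lemma re_inner_le x y : re_inner x y <= nrm x * nrm y.
Proof.
have [->|x_neq0] := eqVneq x 0; first by rewrite /re_inner inner0l hnorm0 mul0r.
have [->|y_neq0] := eqVneq y 0.
  by rewrite re_innerC /re_inner inner0l hnorm0 mulr0.
have xy_gt0 : 0 < nrm x * nrm y by rewrite mulr_gt0 ?hnorm_gt0.
have := sqr_ge0 (nrm (((nrm y)%:C)%C *: x + ((- nrm x)%:C)%C *: y)).
rewrite hnorm_sqD !hnormZ re_innerZl re_innerZr normrN !ger0_norm ?hnorm_ge0 //.
move=> h; rewrite -subr_ge0 -(pmulr_rge0 _ xy_gt0); nra.
Qed.

Lemma hnormD x y : nrm (x + y) <= nrm x + nrm y.
Proof.
rewrite -ler_sqr ?nnegrE ?addr_ge0 ?hnorm_ge0 // hnorm_sqD.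
by have := re_inner_le x y; lra.
Qed.

Lemma opnorm_ge0 f : (0 <= opnorm inner f)%E.
Proof.
apply: le_trans (ereal_sup_ubound _); last by exists 0; rewrite //= hnorm0.
by rewrite lee_fin hnorm_ge0.
Qed.

Lemma opnorm_leP {f} {M : R} : linear f -> 0 <= M ->
  (opnorm inner f <= M%:E)%E <-> (forall x, nrm (f x) <= M * nrm x).
Proof.
move=> f_lin M_ge0; split=> [fM x|fM]; last first.
  apply: ge_ereal_sup => _ [x /= x_le1 <-]; rewrite lee_fin.
  by apply: le_trans (fM x) _; rewrite ler_piMr.
have [->|x_neq0] := eqVneq x 0; first by rewrite linear0_fun // hnorm0 mulr0.
have x_gt0 : 0 < nrm x by rewrite hnorm_gt0.
set u := ((nrm x)^-1%:C)%C *: x.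
have u_unit : nrm u = 1 by rewrite hnormZ gtr0_norm ?invr_gt0 // mulVf ?gt_eqF.
have : ((nrm (f u))%:E <= M%:E)%E.
  by apply: le_trans fM; apply: ereal_sup_ubound; exists u; rewrite //= u_unit.
rewrite lee_fin linearZ_fun // hnormZ gtr0_norm ?invr_gt0 //.
by rewrite mulrC ler_pdivrMr.
Qed.

Lemma bounded_iter {f} n :
  (exists B, forall x, nrm (f x) <= B * nrm x) ->
  exists2 B, 0 <= B & forall x, nrm (iter n f x) <= B * nrm x.
Proof.
case=> B fB; elim: n => [|n [B' B'_ge0 IHn]]; first by exists 1 => // x; rewrite mul1r.
exists (`|B| * B') => [|x /=]; first by rewrite mulr_ge0.
apply: le_trans (fB _) _; rewrite -mulrA.
apply: le_trans (ler_wpM2r (hnorm_ge0 _) (ler_norm B)) _.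
by rewrite ler_wpM2l.
Qed.

Lemma hdense_bound_ext {X : set H} {f} {K B : R} :
  hdense inner X -> linear f -> 0 <= K -> 0 <= B ->
  (forall x, nrm (f x) <= B * nrm x) ->
  (forall x, X x -> nrm (f x) <= K * nrm x) ->
  forall y, nrm (f y) <= K * nrm y.
Proof.
move=> X_dense f_lin K_ge0 B_ge0 fB fK y.
have near_bound x : X x -> nrm (f y) <= K * nrm y + (K + B) * nrm (x - y).
  move=> Xx; have -> : f y = f x - f (x - y) by rewrite -linearB_fun // opprB addrC subrK.
  have := hnormD (f x) (- f (x - y)); rewrite hnormN => fD.
  have := hnormD y (x - y); rewrite addrC subrK => xD.
  have := fK x Xx; have := fB (x - y); nra.
apply/ler_addgt0Pr => e e_gt0.
have KB1_gt0 : 0 < K + B + 1 by lra.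
have [x Xx xy_small] := X_dense y _ (divr_gt0 e_gt0 KB1_gt0).
apply: le_trans (near_bound x Xx) _; rewrite lerD2l.
apply: le_trans (ler_wpM2l (addr_ge0 K_ge0 B_ge0) (ltW xy_small)) _.
by rewrite mulrA ler_pdivrMr // mulrC ler_wpM2l ?ltW // ltrDl.
Qed.

Section InverseIterates.
Context {T S : H -> H} {M : R}.
Hypotheses (ST : cancel S T) (M_ge0 : 0 <= M).
Hypothesis iterT_le : forall n x, nrm (iter n T x) <= M * nrm x.

Lemma hnorm_iterS_le m l x : (m <= l)%N ->
  nrm (iter m S x) <= M * nrm (iter l S x).
Proof.
move=> ml; rewrite -(subnK ml) iterD.
by rewrite -{1}(can_iter (l - m) ST (iter m S x)) iterT_le.
Qed.

Lemma Xset_iterS_le (C : R) m x : 0 <= C -> Xset inner T S C x ->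
  nrm (iter m S x) <= C * M ^+ 2 * nrm x.
Proof.
move=> C_ge0 [n [l [_ _ _ lS [a [b [la nb ab]]]]]].
have iterSx_le : nrm (iter m S x) <= M * a.
  apply: (cvgr_to_ge (@cvgMl_tmp _ _ _ _ _ M _ la)).
  near=> k; apply: hnorm_iterS_le; apply: leq_trans (homoS_ltn_infl lS k).
  by near: k; apply: nbhs_infty_ge.
have b_le : b <= M * nrm x.
  by apply: cvgr_to_le nb _; apply: nearW => k; apply: iterT_le.
apply: le_trans iterSx_le (le_trans (ler_wpM2l M_ge0 ab) _).
rewrite [X in _ <= X](_ : _ = M * (C * (M * nrm x))); last by ring.
by rewrite !ler_wpM2l.
Unshelve. all: by end_near.
Qed.

Lemma iterS_le (C : R) m : 0 <= C -> linear S ->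
  (exists B, forall x, nrm (S x) <= B * nrm x) ->
  hdense inner (Xset inner T S C) ->
  forall x, nrm (iter m S x) <= C * M ^+ 2 * nrm x.
Proof.
move=> C_ge0 S_lin S_bdd X_dense.
have [B B_ge0 iterS_bdd] := bounded_iter m S_bdd.
apply: hdense_bound_ext X_dense (linear_iter m S_lin) _ B_ge0 iterS_bdd _.
  by rewrite !mulr_ge0 // exprn_ge0.
by move=> x; apply: Xset_iterS_le.
Qed.

End InverseIterates.

End InnerProductSpace.

Theorem proposition4p4 (R : realType) (H : lmodType R[i])
  (inner : H -> H -> R[i]) (hH : is_complex_hilbert inner)
  (T S : H -> H)
  (hT : bounded_linear inner T) (hS : bounded_linear inner S)
  (hST : cancel T S) (hTS : cancel S T)
  (C : R) (hC : 0 < C) :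
  hdense inner (Xset inner T S C) ->
  (ereal_sup [set opnorm inner (iter n S) | n in [set: nat]] <=
   C%:E * (ereal_sup [set opnorm inner (iter n T) | n in [set: nat]] *
           ereal_sup [set opnorm inner (iter n T) | n in [set: nat]]))%E.
Proof.
move=> X_dense; have hI := hilbert_inner_product hH.
have [[T_lin _] [S_lin S_bdd]] := (hT, hS).
set MT := ereal_sup [set opnorm inner (iter n T) | n in [set: nat]].
have MT_ge0 : (0 <= MT)%E.
  by apply: le_trans (opnorm_ge0 hI (iter 0 T)) _; apply: ereal_sup_ubound; exists 0%N.
case eMT : MT MT_ge0 => [M| |] // M_ge0; last first.
  by rewrite mulyy gt0_muley ?lte_fin // leey.
rewrite lee_fin in M_ge0.
have iterT_le n : forall x, hnorm inner (iter n T x) <= M * hnorm inner x.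
  apply/(opnorm_leP hI (linear_iter n T_lin) M_ge0); rewrite -eMT.
  by apply: ereal_sup_ubound; exists n.
rewrite -!EFinM; apply: ge_ereal_sup => _ [m _ <-].
apply/(opnorm_leP hI (linear_iter m S_lin)); first by rewrite !mulr_ge0 // ltW.
by move=> x; rewrite -expr2; apply: (iterS_le hI hTS M_ge0 iterT_le C m (ltW hC)).
Qed.
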